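(* Let $(G,X,\Gamma)$ be a $(\mu,\nu)$-path system group containing a $\delta$-constricting element $(g,A)$ with $\delta$-constricting map $\pi_A$, and let $\pi_{uA}$ ($u\in G$) be the translated maps described in the context. For every $\eta\ge0$ there exists $\theta\ge1$ such that for every $\eta$-quasi-convex subgroup $(H,Y)$ of $G$: (I) for every $u\in G$, if $\operatorname{diam}_{uA}(Y)>\theta$ then $uA\subseteq Y^{+\theta}$; (II) for every subgroup $K$ with $H\le K\le G$, if $[K:H]>\theta$ then there exists $k\in K$ with $\operatorname{diam}_{kA}(Y)\le\theta$.
   Context: A path is a rectifiable continuous map $\alpha\colon[a,b]\to X$ parametrised by arc length; it is a $(\kappa,\lambda)$-quasi-geodesic if $d(\alpha(t),\alpha(t'))\le|t-t'|\le\kappa d(\alpha(t),\alpha(t'))+\lambda$. A $(\mu,\nu)$-path system group $(G,X,\Gamma)$ is a group $G$ acting properly by isometries on a geodesic metric space $X$ together with a $G$-invariant collection $\Gamma$ of paths closed under subpaths, such that any two points are joined by an element of $\Gamma$ and every element is a $(\mu,\nu)$-quasi-geodesic. $Y^{+\eta}=\{x: d(x,Y)\le\eta\}$. A subset $Y$ is $\eta$-quasi-convex if every $\gamma\in\Gamma$ with endpoints in $Y$ lies in $Y^{+\eta}$; a subgroup $H$ is $\eta$-quasi-convex, written $(H,Y)$, if $Y$ is $H$-invariant, $\eta$-quasi-convex, and $H$ acts on $Y$ $\eta$-coboundedly (for all $y,y'\in Y$ some $h\in H$ has $d(y,hy')\le\eta$). A map $\pi_A\colon X\to A$ is $\delta$-constricting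 if (CS1) $d(x,\pi_A(x))\le\delta$ for $x\in A$, and (CS2) for all $x,y\in X$ and $\gamma\in\Gamma$ joining them, if $d(\pi_A(x),\pi_A(y))>\delta$ then $\gamma$ meets $B_X(\pi_A(x),\delta)$ and $B_X(\pi_A(y),\delta)$. An element $g$ is $\delta$-constricting, written $(g,A)$, if it has infinite order and $A$ is a $\langle g\rangle$-invariant subset admitting a $\delta$-constricting map $\pi_A$, on which $\langle g\rangle$ acts $\delta$-coboundedly. Translated maps: fix a set $R$ of representatives of $G/\mathrm{Stab}(A)$; for $u\in G$ let $u_0\in R$ with $uA=u_0A$ and set $\pi_{uA}(x)=u_0\pi_A(u_0^{-1}x)$ (a $\delta$-constricting map onto $uA$). $\operatorname{diam}_{uA}(Y)=\operatorname{diam}(\pi_{uA}(Y))$. *)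

From Stdlib Require Import Reals Lra List Sorted.
Open Scope R_scope.

Record is_group (G : Type) (mul : G -> G -> G) (inv : G -> G) (one : G) : Prop := {
  grp_assoc : forall x y z, mul x (mul y z) = mul (mul x y) z;
  grp_one_l : forall x, mul one x = x;
  grp_inv_l : forall x, mul (inv x) x = one }.

Fixpoint npow {G : Type} (mul : G -> G -> G) (one : G) (n : nat) (g : G) : G :=
  match n with O => one | S m => mul g (npow mul one m g) end.

Definition zpow {G : Type} (mul : G -> G -> G) (inv : G -> G) (one : G) (n : Z) (g : G) : G :=
  match n with
  | Z0 => one
  | Zpos p => npow mul one (Pos.to_nat p) g
  | Zneg p => inv (npow mul one (Pos.to_nat p) g)
  end.

Definition is_subgroup {G : Type} (mul : G -> G -> G) (inv : G -> G) (one : G)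
  (H : G -> Prop) : Prop :=
  H one /\ (forall x y, H x -> H y -> H (mul x y)) /\ (forall x, H x -> H (inv x)).

(* [K : H] > theta : there are more than theta pairwise distinct left cosets kH, k in K *)
Definition index_gt {G : Type} (mul : G -> G -> G) (inv : G -> G) (one : G)
  (K H : G -> Prop) (theta : R) : Prop :=
  exists l : list G, INR (length l) > theta /\ (forall k, In k l -> K k) /\
    forall i j, (i < j < length l)%nat ->
      ~ H (mul (inv (nth i l one)) (nth j l one)).

Section Metric.
Context {X : Type} (d : X -> X -> R).

Definition is_metric : Prop :=
  (forall x y, 0 <= d x y) /\ (forall x y, d x y = 0 <-> x = y) /\
  (forall x y, d x y = d y x) /\ (forall x y z, d x z <= d x y + d y z).

Definition is_geodesic_metric_space : Prop :=
  is_metric /\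
  forall x y, exists c : R -> X, c 0 = x /\ c (d x y) = y /\
    forall s t, 0 <= s <= d x y -> 0 <= t <= d x y -> d (c s) (c t) = Rabs (s - t).

Fixpoint psum (f : R -> X) (l : list R) : R :=
  match l with
  | t1 :: ((t2 :: _) as rest) => d (f t1) (f t2) + psum f rest
  | _ => 0
  end.

Definition is_partition (s t : R) (l : list R) : Prop :=
  Sorted Rle l /\ hd_error l = Some s /\ last l s = t.

Definition length_is (f : R -> X) (s t L : R) : Prop :=
  is_lub (fun r => exists l, is_partition s t l /\ r = psum f l) L.

(* f : [a,b] -> X is a rectifiable continuous path parametrised by arc length *)
Definition is_path (a b : R) (f : R -> X) : Prop :=
  a <= b /\
  (forall t, a <= t <= b -> forall eps, 0 < eps -> exists del, 0 < del /\
      forall t', a <= t' <= b -> Rabs (t - t') < del -> d (f t) (f t') < eps) /\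
  (forall s t, a <= s -> s <= t -> t <= b -> length_is f s t (t - s)).

Definition is_quasi_geodesic (kappa lambda : R) (a b : R) (f : R -> X) : Prop :=
  forall t t', a <= t <= b -> a <= t' <= b ->
    d (f t) (f t') <= Rabs (t - t') /\ Rabs (t - t') <= kappa * d (f t) (f t') + lambda.

(* Y^{+eta} = { x : d(x,Y) <= eta }, with d(x,Y) the infimum *)
Definition nbhd (Y : X -> Prop) (eta : R) (x : X) : Prop :=
  forall eps, 0 < eps -> exists y, Y y /\ d x y < eta + eps.

Definition diam_le (S : X -> Prop) (r : R) : Prop :=
  forall x y, S x -> S y -> d x y <= r.

End Metric.

Definition image {X : Type} (f : X -> X) (Y : X -> Prop) : X -> Prop :=
  fun z => exists y, Y y /\ z = f y.

Definition set_eq {X : Type} (A B : X -> Prop) : Prop := forall x, A x <-> B x.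

(* A path system is a predicate Gam a b f : "f restricted to [a,b] belongs to Gamma". *)
Section PSG.
Context {G X : Type} (mul : G -> G -> G) (inv : G -> G) (one : G)
  (act : G -> X -> X) (d : X -> X -> R) (Gam : R -> R -> (R -> X) -> Prop).

Definition translate (u : G) (A : X -> Prop) : X -> Prop :=
  fun x => exists a, A a /\ x = act u a.

Definition is_path_system_group (mu nu : R) : Prop :=
  is_group G mul inv one /\
  is_geodesic_metric_space d /\
  (forall x, act one x = x) /\
  (forall g h x, act (mul g h) x = act g (act h x)) /\
  (forall g x y, d (act g x) (act g y) = d x y) /\
  (* proper action *)
  (forall x r, exists l : list G, forall g, d x (act g x) <= r -> In g l) /\
  (forall a b f, Gam a b f -> is_path d a b f /\ is_quasi_geodesic d mu nu a b f) /\
  (forall g a b f, Gam a b f -> Gam a b (fun t => act g (f t))) /\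
  (forall a b f a' b', Gam a b f -> a <= a' -> a' <= b' -> b' <= b -> Gam a' b' f) /\
  (forall x y, exists a b f, Gam a b f /\ f a = x /\ f b = y).

Definition is_quasi_convex (Y : X -> Prop) (eta : R) : Prop :=
  forall a b f, Gam a b f -> Y (f a) -> Y (f b) ->
    forall t, a <= t <= b -> nbhd d Y eta (f t).

Definition is_qc_subgroup (H : G -> Prop) (Y : X -> Prop) (eta : R) : Prop :=
  is_subgroup mul inv one H /\
  (forall h y, H h -> Y y -> Y (act h y)) /\
  is_quasi_convex Y eta /\
  (forall y y', Y y -> Y y' -> exists h, H h /\ d y (act h y') <= eta).

(* pi : X -> A is delta-constricting (balls are closed balls) *)
Definition is_constricting_map (A : X -> Prop) (pi : X -> X) (delta : R) : Prop :=
  (forall x, A (pi x)) /\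
  (forall x, A x -> d x (pi x) <= delta) /\
  (forall x y a b f, Gam a b f -> f a = x -> f b = y -> d (pi x) (pi y) > delta ->
     (exists t, a <= t <= b /\ d (f t) (pi x) <= delta) /\
     (exists t, a <= t <= b /\ d (f t) (pi y) <= delta)).

Definition is_constricting_element (g : G) (A : X -> Prop) (pi : X -> X) (delta : R) : Prop :=
  (forall n : nat, (0 < n)%nat -> npow mul one n g <> one) /\
  (forall (n : Z) x, A x -> A (act (zpow mul inv one n g) x)) /\
  is_constricting_map A pi delta /\
  (forall a a', A a -> A a' -> exists n : Z, d a (act (zpow mul inv one n g) a') <= delta).

(* rep u = the representative u0 in R of the coset u Stab(A), i.e. u0 A = u A *)
Definition is_coset_rep (A : X -> Prop) (rep : G -> G) : Prop :=
  (forall u, set_eq (translate (rep u) A) (translate u A)) /\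
  (forall u v, set_eq (translate u A) (translate v A) -> rep u = rep v).

Definition translated_map (rep : G -> G) (pi : X -> X) (u : G) : X -> X :=
  fun x => act (rep u) (pi (act (inv (rep u)) x)).

End PSG.

From Stdlib Require Import Reals List ZArith Lia Lra Classical ClassicalEpsilon.
Open Scope R_scope.

(* Far projections of Y onto A force a nontrivial power g^m into H, with |m| bounded in terms of
   eta alone: walking along the projection of Y one meets many points of A far apart, and
   properness of the action forces two of the elements of H matching them (up to powers of g) to
   agree.  Then H acts cocompactly along A through <g^m>, so A lies in a bounded neighbourhood of Y.
   Translating by coset representatives gives (I).  For (II), if every projection diam_{kA}(Y) were
   large, every kA, k in K, would be near Y, and properness would bound the number of cosets of H
   in K. *)

Section Group.
Context {G : Type} {mul : G -> G -> G} {inv : G -> G} {one : G}.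
Hypothesis Hg : is_group G mul inv one.

Local Notation zpw := (zpow mul inv one).

Lemma mulgA x y z : mul x (mul y z) = mul (mul x y) z.
Proof. exact (grp_assoc _ _ _ _ Hg x y z). Qed.

Lemma mul1g x : mul one x = x.
Proof. exact (grp_one_l _ _ _ _ Hg x). Qed.

Lemma mulVg x : mul (inv x) x = one.
Proof. exact (grp_inv_l _ _ _ _ Hg x). Qed.

Lemma mulgV x : mul x (inv x) = one.
Proof.
  rewrite <- (mul1g (mul x (inv x))), <- (mulVg (inv x)) at 1.
  rewrite <- mulgA, (mulgA (inv x) x (inv x)), mulVg, mul1g. apply mulVg.
Qed.

Lemma mulg1 x : mul x one = x.
Proof. rewrite <- (mulVg x), mulgA, mulgV. apply mul1g. Qed.

Lemma mulgI z x y : mul z x = mul z y -> x = y.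
Proof. intro E. rewrite <- (mul1g x), <- (mul1g y), <- (mulVg z), <- !mulgA, E. reflexivity. Qed.

Lemma mulIg z x y : mul x z = mul y z -> x = y.
Proof. intro E. rewrite <- (mulg1 x), <- (mulg1 y), <- (mulgV z), !mulgA, E. reflexivity. Qed.

Lemma invg_unique x y : mul x y = one -> x = inv y.
Proof. intro E. apply (mulIg y). rewrite E, mulVg. reflexivity. Qed.

Lemma invMg x y : inv (mul x y) = mul (inv y) (inv x).
Proof.
  symmetry. apply invg_unique. rewrite <- mulgA, (mulgA (inv x) x y), mulVg, mul1g. apply mulVg.
Qed.

Lemma invgK x : inv (inv x) = x.
Proof. symmetry. apply invg_unique, mulgV. Qed.

Lemma invg1 : inv one = one.
Proof. symmetry. apply invg_unique, mul1g. Qed.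

Lemma conjg_inj u x y : mul (inv u) (mul x u) = mul (inv u) (mul y u) -> x = y.
Proof. intro E. apply mulgI, mulIg in E. exact E. Qed.

Lemma mulgV_eq_mulVg a b c e :
  mul a (inv b) = mul c (inv e) -> mul (inv c) a = mul (inv e) b.
Proof.
  intro E. apply (mulIg (inv b)). rewrite <- !mulgA, E, mulgV, mulg1, mulgA, mulVg. apply mul1g.
Qed.

Lemma npowSr n x : npow mul one (S n) x = mul (npow mul one n x) x.
Proof.
  induction n as [|n IH]; simpl.
  - rewrite mulg1, mul1g. reflexivity.
  - simpl in IH. rewrite <- mulgA, <- IH. reflexivity.
Qed.

Lemma zpowS x n : zpw (Z.succ n) x = mul x (zpw n x).
Proof.
  destruct n as [|p|p].
  - reflexivity.
  - simpl. rewrite Pos.add_1_r, Pos2Nat.inj_succ. reflexivity.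
  - destruct (Pos.succ_pred_or p) as [->|<-].
    + simpl. rewrite mulg1, mulgV. reflexivity.
    + replace (Z.succ (Z.neg (Pos.succ (Pos.pred p)))) with (Z.neg (Pos.pred p)) by lia.
      simpl. rewrite Pos2Nat.inj_succ, npowSr, invMg, mulgA, mulgV, mul1g. reflexivity.
Qed.

Lemma zpowP x n : zpw (Z.pred n) x = mul (inv x) (zpw n x).
Proof. rewrite <- (Z.succ_pred n) at 2. rewrite zpowS, mulgA, mulVg, mul1g. reflexivity. Qed.

Lemma zpowD x a b : zpw (a + b) x = mul (zpw a x) (zpw b x).
Proof.
  induction a using Z.peano_ind.
  - simpl. rewrite mul1g. reflexivity.
  - rewrite Z.add_succ_l, !zpowS, IHa. apply mulgA.
  - rewrite Z.add_pred_l, !zpowP, IHa. apply mulgA.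
Qed.

Lemma zpowN x a : zpw (- a) x = inv (zpw a x).
Proof. apply invg_unique. rewrite <- zpowD, Z.add_opp_diag_l. reflexivity. Qed.

Lemma zpow_comm x a b : mul (zpw a x) (zpw b x) = mul (zpw b x) (zpw a x).
Proof. rewrite <- !zpowD, Z.add_comm. reflexivity. Qed.

Lemma zpowM x m q : zpw (m * q) x = zpw q (zpw m x).
Proof.
  induction q using Z.peano_ind.
  - rewrite Z.mul_0_r. reflexivity.
  - rewrite Z.mul_succ_r, zpowD, zpow_comm, IHq, zpowS. reflexivity.
  - replace (m * Z.pred q)%Z with (m * q + - m)%Z by lia.
    rewrite zpowD, zpow_comm, IHq, zpowP, zpowN. reflexivity.
Qed.

Lemma zpow_inj x : (forall n, (0 < n)%nat -> npow mul one n x <> one) ->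
  forall a b, zpw a x = zpw b x -> a = b.
Proof.
  intros Hx a b E.
  assert (E0 : zpw (a - b) x = one) by (rewrite <- Z.add_opp_r, zpowD, zpowN, E; apply mulgV).
  destruct (a - b)%Z as [|p|p] eqn:Ed; simpl in E0.
  - lia.
  - exfalso. apply (Hx (Pos.to_nat p)); [lia | exact E0].
  - exfalso. apply (Hx (Pos.to_nat p)); [lia |].
    rewrite <- (invgK (npow _ _ _ x)), E0. apply invg1.
Qed.

Lemma subgroup_zpow H h : is_subgroup mul inv one H -> H h -> forall q, H (zpw q h).
Proof.
  intros [H1 [HM HI]] Hh q. induction q using Z.peano_ind.
  - exact H1.
  - rewrite zpowS. auto.
  - rewrite zpowP. auto.
Qed.

Lemma zpow_in_list_bounded x : (forall n, (0 < n)%nat -> npow mul one n x <> one) ->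
  forall F : list G, exists M, forall n, In (zpw n x) F -> (Z.abs n <= M)%Z.
Proof.
  intros Hx F. induction F as [|f F [M IH]].
  - exists 0%Z. intros n [].
  - destruct (classic (exists n0, zpw n0 x = f)) as [[n0 <-]|Hno].
    + exists (Z.max M (Z.abs n0)). intros n [E|E].
      * apply (zpow_inj x Hx) in E. subst. lia.
      * specialize (IH n E). lia.
    + exists M. intros n [E|E]; [exfalso; eauto | auto].
Qed.

End Group.

Lemma pigeonhole {T : Type} (P : nat -> T -> Prop) (n : nat) (F : list T) :
  (forall i, (i < n)%nat -> exists x, In x F /\ P i x) -> (length F < n)%nat ->
  exists i j x, (i < j < n)%nat /\ P i x /\ P j x.
Proof.
  intros HF Hlen.
  destruct (HF 0%nat ltac:(lia)) as [x0 _].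
  set (phi := fun i => epsilon (inhabits x0) (fun x => In x F /\ P i x)).
  assert (Hphi : forall i, (i < n)%nat -> In (phi i) F /\ P i (phi i))
    by (intros i Hi; apply epsilon_spec, HF, Hi).
  apply NNPP. intro Hno.
  assert (ND : NoDup (map phi (seq 0 n))).
  { apply (NoDup_nth _ (phi 0%nat)). rewrite length_map, length_seq. intros i j Hi Hj E.
    rewrite !(map_nth phi (seq 0 n) 0%nat), !seq_nth in E by lia. simpl in E.
    destruct (Nat.lt_trichotomy i j) as [h|[h|h]]; auto; exfalso; apply Hno.
    - exists i, j, (phi i). split; [lia|]. split; [apply Hphi; lia|rewrite E; apply Hphi; lia].
    - exists j, i, (phi j). split; [lia|]. split; [apply Hphi; lia|rewrite <- E; apply Hphi; lia]. }
  assert (INC : incl (map phi (seq 0 n)) F).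
  { intros x Hx. apply in_map_iff in Hx as [i [<- Hi]]. apply in_seq in Hi. apply Hphi. lia. }
  pose proof (NoDup_incl_length ND INC). rewrite length_map, length_seq in H. lia.
Qed.

Lemma Z_range_bounded (f : Z -> R) (M : nat) :
  exists B, forall r, (Z.abs r <= Z.of_nat M)%Z -> f r <= B.
Proof.
  induction M as [|M [B IH]].
  - exists (f 0%Z). intros r Hr. replace r with 0%Z by lia. lra.
  - exists (Rmax B (Rmax (f (Z.of_nat (S M))) (f (- Z.of_nat (S M))%Z))). intros r Hr.
    destruct (Z_le_gt_dec (Z.abs r) (Z.of_nat M)) as [h|h].
    + eapply Rle_trans; [apply IH, h | apply Rmax_l].
    + eapply Rle_trans; [|apply Rmax_r].
      assert (r = Z.of_nat (S M) \/ r = (- Z.of_nat (S M))%Z) as [-> | ->] by lia;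
        [apply Rmax_l | apply Rmax_r].
Qed.

Lemma Rmin_step a b k : a <= b -> Rabs (Rmin (a + INR k) b - Rmin (a + INR (S k)) b) <= 1.
Proof.
  intro Hab. rewrite S_INR. pose proof (pos_INR k). unfold Rmin.
  destruct (Rle_dec (a + INR k) b); destruct (Rle_dec (a + (INR k + 1)) b); apply Rabs_le; lra.
Qed.

Lemma nbhd_mono {X : Type} (d : X -> X -> R) Y r r' x :
  r <= r' -> nbhd d Y r x -> nbhd d Y r' x.
Proof.
  intros Hr Hn eps Heps. destruct (Hn eps Heps) as [y [Yy Dy]]. exists y. split; [exact Yy | lra].
Qed.

Lemma nbhd_of_close {X : Type} (d : X -> X -> R) (Y : X -> Prop) r x y :
  Y y -> d x y <= r -> nbhd d Y r x.
Proof. intros Yy Dy eps Heps. exists y. split; [exact Yy | lra]. Qed.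

Lemma diam_le_mono {X : Type} (d : X -> X -> R) S r r' :
  r <= r' -> diam_le d S r -> diam_le d S r'.
Proof. intros Hr Hd x y Sx Sy. specialize (Hd x y Sx Sy). lra. Qed.

Lemma not_diam_le_image {X : Type} (d : X -> X -> R) (f : X -> X) Y r :
  ~ diam_le d (image f Y) r -> exists y1 y2, Y y1 /\ Y y2 /\ d (f y1) (f y2) > r.
Proof.
  intro Hnd. apply NNPP. intro Hno. apply Hnd. intros z1 z2 [y1 [Y1 ->]] [y2 [Y2 ->]].
  apply Rnot_gt_le. intro Hgt. apply Hno. exists y1, y2. auto.
Qed.

Lemma index_gt_mono {G : Type} (mul : G -> G -> G) inv one K H r r' :
  r' <= r -> index_gt mul inv one K H r -> index_gt mul inv one K H r'.
Proof. intros Hr [l [Hl Hrest]]. exists l. split; [lra | exact Hrest]. Qed.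

Section PathSystemGroup.
Context {G X : Type} {mul : G -> G -> G} {inv : G -> G} {one : G}
  {act : G -> X -> X} {d : X -> X -> R} {Gam : R -> R -> (R -> X) -> Prop}
  {mu nu delta : R} {g : G} {A : X -> Prop} {piA : X -> X}.
Hypothesis HP : is_path_system_group mul inv one act d Gam mu nu.
Hypothesis HC : is_constricting_element mul inv one act d Gam g A piA delta.
Variable x0 : X.

Local Notation zp n := (zpow mul inv one n g).
Local Notation is_qc eta H Y := (is_qc_subgroup mul inv one act d Gam H Y eta).

Lemma group_G : is_group G mul inv one. Proof. apply HP. Qed.
Lemma d_ge0 x y : 0 <= d x y. Proof. apply HP. Qed.
Lemma d_sym x y : d x y = d y x. Proof. apply HP. Qed.
Lemma d_tri x y z : d x z <= d x y + d y z. Proof. apply HP. Qed.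
Lemma d_xx x : d x x = 0. Proof. apply HP. reflexivity. Qed.
Lemma act1 x : act one x = x. Proof. apply HP. Qed.
Lemma actM u v x : act (mul u v) x = act u (act v x). Proof. apply HP. Qed.
Lemma act_isom u x y : d (act u x) (act u y) = d x y. Proof. apply HP. Qed.
Lemma proper_action x r : exists l : list G, forall h, d x (act h x) <= r -> In h l.
Proof. apply HP. Qed.
Lemma gamma_qgeod a b f : Gam a b f -> is_path d a b f /\ is_quasi_geodesic d mu nu a b f.
Proof. apply HP. Qed.
Lemma gamma_act u a b f : Gam a b f -> Gam a b (fun t => act u (f t)). Proof. apply HP. Qed.
Lemma gamma_joins x y : exists a b f, Gam a b f /\ f a = x /\ f b = y. Proof. apply HP. Qed.

Lemma actKV u x : act u (act (inv u) x) = x.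
Proof. rewrite <- actM, (mulgV group_G). apply act1. Qed.
Lemma d_actV u x y : d x (act (inv u) y) = d (act u x) y.
Proof. rewrite <- (act_isom u x), actKV. reflexivity. Qed.

Lemma g_infinite_order n : (0 < n)%nat -> npow mul one n g <> one. Proof. apply HC. Qed.
Lemma pi_A x : A (piA x). Proof. apply HC. Qed.
Lemma pi_near x : A x -> d x (piA x) <= delta. Proof. apply HC. Qed.
Lemma pi_constricting x y a b f : Gam a b f -> f a = x -> f b = y -> d (piA x) (piA y) > delta ->
  (exists t, a <= t <= b /\ d (f t) (piA x) <= delta) /\
  (exists t, a <= t <= b /\ d (f t) (piA y) <= delta).
Proof. apply HC. Qed.
Lemma A_cobounded a a' : A a -> A a' -> exists n, d a (act (zp n) a') <= delta.
Proof. apply HC. Qed.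

Lemma act_zpow_comm m n x : act (zp m) (act (zp n) x) = act (zp n) (act (zp m) x).
Proof. rewrite <- !actM, (zpow_comm group_G). reflexivity. Qed.

Lemma delta_ge0 : 0 <= delta.
Proof. pose proof (pi_near _ (pi_A x0)). pose proof (d_ge0 (piA x0) (piA (piA x0))). lra. Qed.

Definition proj_lip (D : R) := 3 * delta + Rabs mu * D + Rabs nu.

Lemma proj_lip_ge0 D : 0 <= D -> 0 <= proj_lip D.
Proof.
  intro HD. pose proof delta_ge0. pose proof (Rabs_pos nu). unfold proj_lip.
  assert (0 <= Rabs mu * D) by (apply Rmult_le_pos; [apply Rabs_pos | lra]). lra.
Qed.

(* If the projections are far apart, a path of Gamma from x to x' passes near both of them, and
   its length, which dominates their distance, is controlled by d x x' through quasi-geodesicity. *)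
Lemma proj_coarse_lip x x' D : d x x' <= D -> d (piA x) (piA x') <= proj_lip D.
Proof.
  intro HD. pose proof delta_ge0. pose proof (d_ge0 x x'). pose proof (Rabs_pos nu).
  assert (0 <= Rabs mu * D) by (apply Rmult_le_pos; [apply Rabs_pos | lra]).
  unfold proj_lip. destruct (Rle_dec (d (piA x) (piA x')) delta) as [h|h]; [lra|].
  destruct (gamma_joins x x') as [a [b [f [Hf [Ha Hb]]]]].
  destruct (pi_constricting _ _ _ _ _ Hf Ha Hb) as [[t [Ht Dt]] [t' [Ht' Dt']]]; [lra|].
  destruct (gamma_qgeod _ _ _ Hf) as [[Hab _] Hq].
  destruct (Hq t t' Ht Ht') as [Q1 _].
  destruct (Hq a b ltac:(lra) ltac:(lra)) as [_ Q2]. rewrite Ha, Hb in Q2.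
  assert (Rabs (t - t') <= b - a) by (apply Rabs_le; lra).
  assert (Rabs (a - b) = b - a) by (rewrite Rabs_minus_sym; apply Rabs_right; lra).
  assert (mu * d x x' <= Rabs mu * D).
  { apply Rle_trans with (Rabs mu * d x x').
    - apply Rmult_le_compat_r; [lra | apply Rle_abs].
    - apply Rmult_le_compat_l; [apply Rabs_pos | lra]. }
  pose proof (Rle_abs nu).
  pose proof (d_tri (piA x) (f t) (piA x')). pose proof (d_tri (f t) (f t') (piA x')).
  rewrite d_sym in Dt. lra.
Qed.

Lemma discrete_ivt (c : nat -> X) L s n : 0 <= s -> (forall k, d (c k) (c (S k)) <= L) ->
  s <= d (c 0%nat) (c n) -> exists k, s <= d (c 0%nat) (c k) <= s + L.
Proof.
  intros Hs Hstep. induction n as [|n IH]; intro Hn.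
  - exists 0%nat. rewrite d_xx in *. pose proof (Hstep 0%nat). pose proof (d_ge0 (c 0%nat) (c 1%nat)). lra.
  - destruct (Rle_dec s (d (c 0%nat) (c n))) as [h|h]; [exact (IH h)|].
    exists (S n). pose proof (Hstep n). pose proof (d_tri (c 0%nat) (c n) (c (S n))). lra.
Qed.

(* Once the projection of Y is larger than 2 delta, a path of Gamma from z to a point of Y with far
   projection passes near pi z; quasi-convexity puts that part of the path near Y. *)
Lemma proj_near_qc eta H Y : is_qc eta H Y ->
  forall y1 y2, Y y1 -> Y y2 -> d (piA y1) (piA y2) > 2 * delta ->
  forall z, Y z -> exists y, Y y /\ d (piA z) y < delta + eta + 1.
Proof.
  intros [_ [_ [Hqc _]]] y1 y2 Y1 Y2 Hd z Yz.
  assert (exists w, Y w /\ d (piA z) (piA w) > delta) as [w [Yw Hw]].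
  { destruct (Rlt_dec delta (d (piA z) (piA y1))) as [h|h]; [exists y1; auto|].
    exists y2. split; [exact Y2|].
    pose proof (d_tri (piA y1) (piA z) (piA y2)) as T. rewrite (d_sym (piA y1) (piA z)) in T.
    apply Rnot_lt_le in h. lra. }
  destruct (gamma_joins z w) as [a [b [f [Hf [Ha Hb]]]]].
  destruct (pi_constricting _ _ _ _ _ Hf Ha Hb Hw) as [[t [Ht Dt]] _].
  assert (Hn : nbhd d Y eta (f t)) by (apply (Hqc a b f Hf); [rewrite Ha | rewrite Hb | ]; auto).
  destruct (Hn 1 ltac:(lra)) as [y [Yy Dy]]. exists y. split; [exact Yy|].
  pose proof (d_tri (piA z) (f t) y). rewrite d_sym in Dt. lra.
Qed.

(* Sample a path of Gamma from y1 to y2 at unit steps and replace each sample by a nearby point of Y. *)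
Lemma qc_proj_chain eta H Y : is_qc eta H Y -> forall y1 y2, Y y1 -> Y y2 ->
  exists c : nat -> X, (forall k, exists z, Y z /\ c k = piA z) /\
    (forall k, d (c k) (c (S k)) <= proj_lip (2 * eta + 3)) /\
    d (c 0%nat) (piA y1) <= proj_lip (eta + 1) /\
    exists K, d (c K) (piA y2) <= proj_lip (eta + 1).
Proof.
  intros [_ [_ [Hqc _]]] y1 y2 Y1 Y2.
  destruct (gamma_joins y1 y2) as [a [b [f [Hf [Ha Hb]]]]].
  destruct (gamma_qgeod _ _ _ Hf) as [[Hab _] Hq].
  set (tk := fun k => Rmin (a + INR k) b).
  assert (Htk : forall k, a <= tk k <= b).
  { intro k. pose proof (pos_INR k). split; [apply Rmin_glb; lra | apply Rmin_r]. }
  set (P := fun k z => Y z /\ d (f (tk k)) z < eta + 1).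
  assert (HE : forall k, exists z, P k z).
  { intro k. assert (Hn : nbhd d Y eta (f (tk k)))
      by (apply (Hqc a b f Hf); [rewrite Ha | rewrite Hb | ]; auto).
    destruct (Hn 1 ltac:(lra)) as [y [Yy Dy]]. exists y. split; auto. }
  set (z := fun k => epsilon (inhabits y1) (P k)).
  assert (Hz : forall k, P k (z k)) by (intro k; apply epsilon_spec, HE).
  exists (fun k => piA (z k)). split; [|split; [|split]].
  - intro k. exists (z k). split; [apply Hz | reflexivity].
  - intro k. apply proj_coarse_lip.
    destruct (Hz k) as [_ D1]. destruct (Hz (S k)) as [_ D2].
    destruct (Hq (tk k) (tk (S k)) (Htk k) (Htk (S k))) as [Q _].
    pose proof (Rmin_step a b k Hab).
    pose proof (d_tri (z k) (f (tk k)) (z (S k))). pose proof (d_tri (f (tk k)) (f (tk (S k))) (z (S k))).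
    rewrite d_sym in D1. unfold tk in *. lra.
  - apply proj_coarse_lip. destruct (Hz 0%nat) as [_ D1].
    assert (tk 0%nat = a) by (unfold tk; simpl; rewrite Rplus_0_r; apply Rmin_left; lra).
    rewrite H0, Ha in D1. rewrite d_sym. lra.
  - destruct (INR_unbounded (b - a)) as [K HK]. exists K.
    apply proj_coarse_lip. destruct (Hz K) as [_ D1].
    assert (tk K = b) by (unfold tk; apply Rmin_right; lra).
    rewrite H0, Hb in D1. rewrite d_sym. lra.
Qed.

Lemma qc_proj_levels eta H Y : is_qc eta H Y -> forall y1 y2, Y y1 -> Y y2 ->
  exists z0, Y z0 /\ forall s, 0 <= s -> s + 2 * proj_lip (eta + 1) <= d (piA y1) (piA y2) ->
    exists z, Y z /\ s <= d (piA z0) (piA z) <= s + proj_lip (2 * eta + 3).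
Proof.
  intros HY y1 y2 Y1 Y2.
  destruct (qc_proj_chain eta H Y HY y1 y2 Y1 Y2) as [c [Hcz [Hcs [Hc0 [K HcK]]]]].
  destruct (Hcz 0%nat) as [z0 [Yz0 Ez0]]. exists z0. split; [exact Yz0|].
  intros s Hs Hfar. rewrite <- Ez0.
  destruct (discrete_ivt c _ s K Hs Hcs) as [k Hk].
  { pose proof (d_tri (piA y1) (c 0%nat) (piA y2)) as T. pose proof (d_tri (c 0%nat) (c K) (piA y2)).
    rewrite (d_sym (piA y1) (c 0%nat)) in T. lra. }
  destruct (Hcz k) as [z [Yz Ez]]. exists z. rewrite <- Ez. split; [exact Yz | exact Hk].
Qed.

(* Properness at a single point of A, transported to any p in A by the power of g bringing that
   point within delta of p. *)
Lemma proper_on_A r : exists F : list G, forall p, A p -> exists k,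
  forall w, d p (act w p) <= r -> In (mul (inv (zp k)) (mul w (zp k))) F.
Proof.
  destruct (proper_action (piA x0) (2 * delta + r)) as [F HF]. exists F. intros p Hp.
  destruct (A_cobounded p (piA x0) Hp (pi_A x0)) as [k Hk]. exists k. intros w Hw. apply HF.
  rewrite !actM, d_actV.
  set (q := act (zp k) (piA x0)) in *.
  pose proof (d_tri q p (act w q)) as T1. pose proof (d_tri p (act w p) (act w q)) as T2.
  rewrite act_isom in T2. rewrite (d_sym q p) in T1. lra.
Qed.

Lemma zpow_displacement_bound D : exists M, forall p n, A p ->
  d p (act (zp n) p) <= D -> (Z.abs n <= M)%Z.
Proof.
  destruct (proper_on_A D) as [F HF].
  destruct (zpow_in_list_bounded group_G g g_infinite_order F) as [M HM].
  exists M. intros p n Hp Hn. destruct (HF p Hp) as [k Hk]. apply HM.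
  specialize (Hk _ Hn). rewrite (zpow_comm group_G), (mulgA group_G), (mulVg group_G),
    (mul1g group_G) in Hk. exact Hk.
Qed.

Lemma zpow_displacement_bounded M : exists B, forall p r, A p ->
  (Z.abs r <= M)%Z -> d p (act (zp r) p) <= B.
Proof.
  destruct (Z_range_bounded (fun r => d (piA x0) (act (zp r) (piA x0))) (Z.to_nat M)) as [B HB].
  exists (2 * delta + B). intros p r Hp Hr.
  destruct (A_cobounded p (piA x0) Hp (pi_A x0)) as [k Hk].
  set (q := act (zp k) (piA x0)) in *.
  assert (Hq : d q (act (zp r) q) <= B).
  { unfold q. rewrite act_zpow_comm, act_isom. apply HB. lia. }
  pose proof (d_tri p q (act (zp r) p)). pose proof (d_tri q (act (zp r) q) (act (zp r) p)).
  rewrite act_isom, (d_sym q p) in *. lra.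
Qed.

Lemma qc_matching_element eta H Y C : is_qc eta H Y ->
  forall p y0 a y, A p -> Y y0 -> d p y0 <= C -> A a -> Y y -> d a y <= C ->
  exists h n, H h /\ d p (act (zp n) a) <= delta /\
    d p (act (mul h (inv (zp n))) p) <= 2 * C + eta + delta.
Proof.
  intros [_ [_ [_ Hcob]]] p y0 a y Hp Yy0 Dpy0 Ha Yy Day.
  destruct (Hcob y0 y Yy0 Yy) as [h [Hh Dh]].
  destruct (A_cobounded p a Hp Ha) as [n Hn].
  exists h, n. split; [exact Hh | split; [exact Hn |]].
  rewrite actM.
  pose proof (d_tri p y0 (act h (act (inv (zp n)) p))) as T1.
  pose proof (d_tri y0 (act h y) (act h (act (inv (zp n)) p))) as T2.
  pose proof (d_tri y a (act (inv (zp n)) p)) as T3.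
  rewrite act_isom in T2. rewrite (d_actV (zp n) a p) in T3.
  pose proof (d_sym (act (zp n) a) p). pose proof (d_sym y a). lra.
Qed.

(* Pigeonhole on the elements h_j g^(-n_j), with h_j in H moving y0 near the j-th level point a_j
   and g^(n_j) moving a_j near p; they all move p a bounded amount, so two coincide. *)
Lemma levels_force_power eta C L step : 0 <= C -> L + 2 * delta < step ->
  exists (N : nat) M, forall H Y, is_qc eta H Y ->
  forall p y0, A p -> Y y0 -> d p y0 <= C ->
  (forall j, (j <= N)%nat -> exists a y, A a /\ Y y /\ d a y <= C /\
     INR j * step <= d p a <= INR j * step + L) ->
  exists m, m <> 0%Z /\ (Z.abs m <= 2 * M)%Z /\ H (zp m).
Proof.
  intros HC0 Hstep.
  destruct (proper_on_A (2 * C + eta + delta)) as [F HF].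
  destruct (zpow_displacement_bound (INR (length F) * step + L + delta)) as [M HM].
  exists (length F), M. intros H Y HY p y0 Hp Yy0 Dpy0 Hlev.
  pose proof HY as [[_ [HHM HHI]] _].
  destruct (HF p Hp) as [k Hk].
  set (P := fun j w => exists a h n, H h /\ (Z.abs n <= M)%Z /\ d p (act (zp n) a) <= delta /\
    INR j * step <= d p a <= INR j * step + L /\
    w = mul (inv (zp k)) (mul (mul h (inv (zp n))) (zp k))).
  destruct (pigeonhole P (S (length F)) F) as [i [j [w [Hij [Pi Pj]]]]]; [|lia|].
  - intros j Hj. destruct (Hlev j ltac:(lia)) as [a [y [Ha [Yy [Day Hja]]]]].
    destruct (qc_matching_element eta H Y C HY p y0 a y Hp Yy0 Dpy0 Ha Yy Day)
      as [h [n [Hh [Hn Hw]]]].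
    eexists. split; [apply Hk, Hw | exists a, h, n; repeat split; auto; try lra].
    apply (HM p n Hp).
    pose proof (d_tri p (act (zp n) a) (act (zp n) p)). rewrite act_isom in *.
    assert (INR j * step <= INR (length F) * step)
      by (apply Rmult_le_compat_r; [pose proof delta_ge0; lra | apply le_INR; lia]).
    pose proof (d_sym a p). lra.
  - destruct Pi as [ai [hi [ni [Hhi [Bi [Di [Li ->]]]]]]].
    destruct Pj as [aj [hj [nj [Hhj [Bj [Dj [Lj Ew]]]]]]].
    apply (conjg_inj group_G), (mulgV_eq_mulVg group_G) in Ew.
    rewrite <- (zpowN group_G), <- (zpowD group_G) in Ew.
    exists (- nj + ni)%Z. split; [|split; [lia | rewrite <- Ew; auto]].
    intro E0. replace ni with nj in Di by lia.
    assert (Dij : d ai aj <= 2 * delta).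
    { rewrite <- (act_isom (zp nj)).
      pose proof (d_tri (act (zp nj) ai) p (act (zp nj) aj)). rewrite d_sym in Di. lra. }
    pose proof (d_tri p ai aj).
    assert (INR i + 1 <= INR j) by (rewrite <- S_INR; apply le_INR; lia).
    assert (0 <= (INR j - INR i - 1) * step) by (apply Rmult_le_pos; pose proof delta_ge0; lra).
    nra.
Qed.

Lemma far_projections_force_power eta : 0 <= eta -> exists theta M, 2 * delta <= theta /\
  forall H Y, is_qc eta H Y -> forall y1 y2, Y y1 -> Y y2 -> d (piA y1) (piA y2) > theta ->
  exists m, m <> 0%Z /\ (Z.abs m <= M)%Z /\ H (zp m).
Proof.
  intro Heta. pose proof delta_ge0 as Hdelta.
  set (L := proj_lip (2 * eta + 3)).
  set (step := L + 2 * delta + 1).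
  assert (HL : 0 <= L) by (apply proj_lip_ge0; lra).
  destruct (levels_force_power eta (delta + eta + 1) L step ltac:(lra) ltac:(unfold step; lra))
    as [N [M HNM]].
  assert (HN : 0 <= INR N * step) by (apply Rmult_le_pos; [apply pos_INR | unfold step; lra]).
  assert (Hlip : 0 <= proj_lip (eta + 1)) by (apply proj_lip_ge0; lra).
  exists (2 * delta + INR N * step + 2 * proj_lip (eta + 1)), (2 * M)%Z. split; [lra|].
  intros H Y HY y1 y2 Y1 Y2 Hfar.
  pose proof (proj_near_qc eta H Y HY y1 y2 Y1 Y2 ltac:(lra)) as Hnear.
  destruct (qc_proj_levels eta H Y HY y1 y2 Y1 Y2) as [z0 [Yz0 Hlev]].
  destruct (Hnear z0 Yz0) as [y0 [Yy0 Dy0]].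
  apply (HNM H Y HY (piA z0) y0 (pi_A z0) Yy0 ltac:(lra)).
  intros j Hj.
  assert (Hjs : INR j * step <= INR N * step)
    by (apply Rmult_le_compat_r; [unfold step; lra | apply le_INR, Hj]).
  destruct (Hlev (INR j * step)) as [z [Yz Dz]];
    [apply Rmult_le_pos; [apply pos_INR | unfold step; lra] | lra |].
  destruct (Hnear z Yz) as [y [Yy Dy]].
  exists (piA z), y. repeat split; [apply pi_A | exact Yy | lra | apply Dz | apply Dz].
Qed.

(* Write a in A as g^n p up to delta and divide n by m: the quotient part lies in H, and the
   remainder is a bounded power of g. *)
Lemma A_near_of_power M : exists B, forall H Y, is_subgroup mul inv one H ->
  (forall h y, H h -> Y y -> Y (act h y)) ->
  forall m, m <> 0%Z -> (Z.abs m <= M)%Z -> H (zp m) ->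
  forall p y0 a, A p -> Y y0 -> A a -> exists y, Y y /\ d a y <= B + d p y0.
Proof.
  destruct (zpow_displacement_bounded M) as [B HB]. exists (delta + B).
  intros H Y HH Hinvar m Hm0 Hm Hgm p y0 a Hp Yy0 Ha.
  destruct (A_cobounded a p Ha Hp) as [n Hn].
  rewrite (Z.quot_rem' n m), (zpowD group_G), actM in Hn.
  pose proof (Z.rem_bound_abs n m Hm0) as Hr.
  set (q := Z.quot n m) in *. set (r := Z.rem n m) in *.
  exists (act (zp (m * q)) y0). split.
  { apply Hinvar; [|exact Yy0]. rewrite (zpowM group_G). apply (subgroup_zpow group_G); auto. }
  pose proof (d_tri a (act (zp (m * q)) (act (zp r) p)) (act (zp (m * q)) y0)).
  pose proof (d_tri (act (zp r) p) p y0).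
  assert (d p (act (zp r) p) <= B) by (apply HB; [exact Hp | lia]).
  rewrite act_isom in *. rewrite (d_sym (act (zp r) p) p) in *. lra.
Qed.

Lemma far_projections_A_near eta : 0 <= eta -> exists theta, 1 <= theta /\
  forall H Y, is_qc eta H Y -> forall y1 y2, Y y1 -> Y y2 -> d (piA y1) (piA y2) > theta ->
  forall a, A a -> nbhd d Y theta a.
Proof.
  intro Heta.
  destruct (far_projections_force_power eta Heta) as [theta0 [M [Htheta0 Hpow]]].
  destruct (A_near_of_power M) as [B HB].
  set (theta := Rmax (Rmax 1 theta0) (B + (delta + eta + 1))).
  assert (Ht1 : Rmax 1 theta0 <= theta) by apply Rmax_l.
  assert (HtB : B + (delta + eta + 1) <= theta) by apply Rmax_r.
  pose proof (Rmax_l 1 theta0) as Hm1. pose proof (Rmax_r 1 theta0) as Hm2.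
  exists theta. split; [lra|].
  intros H Y HY y1 y2 Y1 Y2 Hfar a Ha.
  destruct (Hpow H Y HY y1 y2 Y1 Y2 ltac:(lra)) as [m [Hm0 [Hm Hgm]]].
  destruct (proj_near_qc eta H Y HY y1 y2 Y1 Y2 ltac:(lra) y1 Y1) as [y0 [Yy0 Dy0]].
  destruct HY as [HH [Hinvar _]].
  destruct (HB H Y HH Hinvar m Hm0 Hm Hgm (piA y1) y0 a (pi_A y1) Yy0 Ha) as [y [Yy Dy]].
  apply (nbhd_of_close d Y theta a y Yy). lra.
Qed.

Lemma qc_subgroup_conj eta H Y u : is_qc eta H Y ->
  is_qc eta (fun h => H (mul u (mul h (inv u)))) (fun x => Y (act u x)).
Proof.
  pose proof group_G as HG.
  intros [[H1 [HM HI]] [Hinvar [Hqc Hcob]]].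
  set (cj := fun h => mul u (mul h (inv u))).
  assert (cjM : forall x y, cj (mul x y) = mul (cj x) (cj y)).
  { intros x y. unfold cj. rewrite <- !(mulgA HG), (mulgA HG (inv u) u), (mulVg HG), (mul1g HG).
    reflexivity. }
  assert (cjV : forall x, cj (inv x) = inv (cj x)).
  { intro x. unfold cj. rewrite !(invMg HG), (invgK HG), (mulgA HG). reflexivity. }
  assert (cj_act : forall h y, act u (act h y) = act (cj h) (act u y)).
  { intros h y. unfold cj. rewrite <- !actM, <- !(mulgA HG), (mulVg HG), (mulg1 HG). reflexivity. }
  split; [split; [|split] | split; [|split]].
  - change (H (cj one)). unfold cj. rewrite (mul1g HG), (mulgV HG). exact H1.
  - intros x y Hx Hy. change (H (cj (mul x y))). rewrite cjM. auto.
  - intros x Hx. change (H (cj (inv x))). rewrite cjV. auto.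
  - intros h y Hh Hy. simpl. rewrite cj_act. auto.
  - intros a b f Hf Ya Yb t Ht eps Heps.
    destruct (Hqc a b _ (gamma_act u a b f Hf) Ya Yb t Ht eps Heps) as [y [Yy Dy]].
    exists (act (inv u) y). rewrite actKV, d_actV. auto.
  - intros y y' Yy Yy'. destruct (Hcob _ _ Yy Yy') as [h [Hh Dh]].
    exists (mul (inv u) (mul h u)). split.
    + replace (mul u (mul (mul (inv u) (mul h u)) (inv u))) with h; [exact Hh|].
      rewrite !(mulgA HG), (mulgV HG), (mul1g HG), <- (mulgA HG), (mulgV HG), (mulg1 HG).
      reflexivity.
    + rewrite <- (act_isom u), <- actM, (mulgA HG), (mulgV HG), (mul1g HG), actM. exact Dh.
Qed.

Context {rep : G -> G}.
Hypothesis HR : is_coset_rep act A rep.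

Lemma translated_far_projection_near eta : 0 <= eta -> exists theta, 1 <= theta /\
  forall H Y, is_qc eta H Y -> forall u,
    ~ diam_le d (image (translated_map inv act rep piA u) Y) theta ->
    forall x, translate act u A x -> nbhd d Y theta x.
Proof.
  intro Heta. destruct (far_projections_A_near eta Heta) as [theta [Htheta Hnear]].
  exists theta. split; [exact Htheta|].
  intros H Y HY u Hdiam x Hx.
  set (u0 := rep u).
  destruct (not_diam_le_image d _ Y theta Hdiam) as [y1 [y2 [Y1 [Y2 Hfar]]]].
  unfold translated_map in Hfar. fold u0 in Hfar. rewrite act_isom in Hfar.
  destruct (proj2 (proj1 HR u x) Hx) as [a [Ha ->]]. fold u0.
  assert (Hn := Hnear _ _ (qc_subgroup_conj eta H Y u0 HY) (act (inv u0) y1) (act (inv u0) y2)).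
  simpl in Hn. rewrite !actKV in Hn.
  intros eps Heps. destruct (Hn Y1 Y2 Hfar a Ha eps Heps) as [y [Yy Dy]].
  exists (act u0 y). rewrite act_isom. auto.
Qed.

(* If all the K-translates of x stay near Y, the elements h_i k_i^(-1), where h_i in H brings a fixed
   point of Y near k_i^(-1) x, all move x a bounded amount; by properness two of them coincide, which
   puts k_i and k_j in the same coset of H. *)
Lemma index_bounded_of_orbit_near eta theta x : exists N, forall H Y K,
  is_qc eta H Y -> is_subgroup mul inv one K ->
  (forall k, K k -> nbhd d Y theta (act k x)) -> ~ index_gt mul inv one K H N.
Proof.
  destruct (proper_action x (2 * theta + 2 + eta)) as [F HF].
  exists (INR (length F)). intros H Y K HY [K1 [_ KI]] Hnear [l [Hlen [HlK Hdist]]].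
  destruct HY as [[_ [HHM HHI]] [_ [_ Hcob]]].
  destruct (Hnear one K1 1 ltac:(lra)) as [y [Yy Dy]]. rewrite act1 in Dy.
  set (P := fun i w => exists h, H h /\ w = mul h (inv (nth i l one))).
  destruct (pigeonhole P (length l) F) as [i [j [w [Hij [[hi [Hhi Ei]] [hj [Hhj Ej]]]]]]].
  - intros i Hi. set (ki := nth i l one).
    destruct (Hnear (inv ki) (KI _ (HlK _ (nth_In _ _ Hi))) 1 ltac:(lra)) as [yi [Yyi Dyi]].
    destruct (Hcob y yi Yy Yyi) as [h [Hh Dh]].
    exists (mul h (inv ki)). split; [apply HF | exists h; auto].
    rewrite actM.
    pose proof (d_tri x y (act h (act (inv ki) x))) as T1.
    pose proof (d_tri y (act h yi) (act h (act (inv ki) x))) as T2.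
    rewrite act_isom in T2. pose proof (d_sym yi (act (inv ki) x)). lra.
  - apply INR_lt. lra.
  - apply (Hdist i j Hij).
    rewrite Ei in Ej. symmetry in Ej. apply (mulgV_eq_mulVg group_G) in Ej. rewrite <- Ej. auto.
Qed.

End PathSystemGroup.

Theorem mainTheorem14
  (G X : Type) (mul : G -> G -> G) (inv : G -> G) (one : G)
  (act : G -> X -> X) (d : X -> X -> R) (Gam : R -> R -> (R -> X) -> Prop)
  (mu nu delta : R) (g : G) (A : X -> Prop) (piA : X -> X) (rep : G -> G) :
  is_path_system_group mul inv one act d Gam mu nu ->
  is_constricting_element mul inv one act d Gam g A piA delta ->
  is_coset_rep act A rep ->
  forall eta : R, 0 <= eta ->
  exists theta : R, 1 <= theta /\
    forall (H : G -> Prop) (Y : X -> Prop),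
      is_qc_subgroup mul inv one act d Gam H Y eta ->
      (forall u : G,
         ~ diam_le d (image (translated_map inv act rep piA u) Y) theta ->
         forall x, translate act u A x -> nbhd d Y theta x) /\
      (forall K : G -> Prop,
         is_subgroup mul inv one K -> (forall h, H h -> K h) ->
         index_gt mul inv one K H theta ->
         exists k, K k /\ diam_le d (image (translated_map inv act rep piA k) Y) theta).
Proof.
  intros HP HC HR eta Heta.
  destruct (classic (inhabited X)) as [[x0]|NX].
  2:{ exists 1. split; [lra|]. intros H Y _. split.
      - intros u _ x _. exfalso. exact (NX (inhabits x)).
      - intros K [K1 _] _ _. exists one. split; [exact K1|].
        intros x. exfalso. exact (NX (inhabits x)). }
  destruct (translated_far_projection_near HP HC x0 HR eta Heta) as [theta1 [Ht1 HI]].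
  destruct (index_bounded_of_orbit_near HP eta theta1 (piA x0)) as [N HN].
  exists (Rmax theta1 N). pose proof (Rmax_l theta1 N) as Hm1. pose proof (Rmax_r theta1 N) as Hm2.
  split; [lra|]. intros H Y HY.
  assert (HI' : forall u, ~ diam_le d (image (translated_map inv act rep piA u) Y) (Rmax theta1 N) ->
    forall x, translate act u A x -> nbhd d Y theta1 x).
  { intros u Hu. apply (HI H Y HY u). intro Hd. apply Hu. apply (diam_le_mono d _ theta1); auto. }
  split.
  - intros u Hu x Hx. apply (nbhd_mono d Y theta1); [exact Hm1 | exact (HI' u Hu x Hx)].
  - intros K HK _ Hidx. apply NNPP. intro Hno.
    apply (HN H Y K HY HK); [| apply (index_gt_mono mul inv one K H (Rmax theta1 N)); auto].
    intros k Kk. apply (HI' k); [intro Hd; apply Hno; exists k; auto |].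
    exists (piA x0). split; [apply (pi_A HC) | reflexivity].
Qed.
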